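(* Let $q=3^k$ for a positive integer $k$, let $n$ be a positive integer and $j\in\{0,1,\dots,n\}$. Let $A\subseteq \mathbb{F}_q^n$ be a set such that every element of $A$ has exactly $j$ coordinates equal to zero, and such that for any three distinct elements $x,y,z\in A$ we have $xy+yz+zx\neq 0$ in $\mathbb{F}_q^n$ (coordinatewise products). Define $$P(x,y,z)=\prod_{i=1}^{n} \left(1-(x_iy_i+y_iz_i+z_ix_i)^{q-1}\right)\in\mathbb{F}_q.$$ Then for $x,y,z\in A$, $P(x,y,z)\neq 0$ if and only if $x=y=z$.
   Context: For $x\in\mathbb{F}_q^n$, $x_i$ denotes its $i$-th coordinate. *)

From HB Require Import structures.
From mathcomp Require Import all_boot all_order all_algebra.
Set Implicit Arguments. Unset Strict Implicit. Unset Printing Implicit Defensive.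
Import GRing.Theory.
Local Open Scope ring_scope.

Definition vmul (F : finFieldType) (n : nat) (x y : {ffun 'I_n -> F}) :
  {ffun 'I_n -> F} := [ffun i => x i * y i].

Definition nzeros (F : finFieldType) (n : nat) (x : {ffun 'I_n -> F}) : nat :=
  #|[set i | x i == 0]|.

Definition Ppoly (F : finFieldType) (n q : nat) (x y z : {ffun 'I_n -> F}) : F :=
  \prod_(i < n) (1 - (x i * y i + y i * z i + z i * x i) ^+ (q - 1)).

From HB Require Import structures.
From mathcomp Require Import all_boot all_order all_algebra finfield.
From mathcomp Require Import ring.
Set Implicit Arguments. Unset Strict Implicit. Unset Printing Implicit Defensive.
Import GRing.Theory.
Local Open Scope ring_scope.

(* By Fermat, the i-th factor of P(x,y,z) is 1 when x_i y_i + y_i z_i + z_i x_i = 0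
   and 0 otherwise, so P(x,y,z) != 0 iff xy + yz + zx = 0 coordinatewise.  In
   characteristic 3 this holds when x = y = z.  Conversely, if two of x, y, z
   are equal, say x = y, it reads x_i (x_i - z_i) = 0, i.e. z agrees with x
   outside the zeros of x; as x and z have the same number of zeros, x = z.
   Finally, x, y, z pairwise distinct is excluded by the hypothesis on A. *)

Section FiniteField.

Variable F : finFieldType.

Lemma expf_card_pred (a : F) : a != 0 -> a ^+ (#|F| - 1) = 1.
Proof.
move=> a_neq0; apply: (mulfI a_neq0); rewrite mulr1 -exprS subn1.
by rewrite prednK ?expf_card // ltnW ?finNzRing_gt1.
Qed.

Lemma prod_one_sub_expf_neq0 (I : finType) (s : I -> F) :
  \prod_(i : I) (1 - s i ^+ (#|F| - 1)) != 0 <-> forall i, s i = 0.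
Proof.
have card_pred_gt0 : (0 < #|F| - 1)%N by rewrite subn_gt0 finNzRing_gt1.
split=> [P_neq0 i | s0].
  apply/eqP; apply: contraNT P_neq0 => si_neq0.
  by rewrite (bigD1 i) //= expf_card_pred // subrr mul0r.
by rewrite big1 ?oner_eq0 // => i _; rewrite s0 expr0n eqn0Ngt card_pred_gt0 subr0.
Qed.

Variable n : nat.
Implicit Types x y z : {ffun 'I_n -> F}.

Definition vsym2 x y z : {ffun 'I_n -> F} := vmul x y + vmul y z + vmul z x.

Lemma vsym2_rot x y z : vsym2 x y z = vsym2 y z x.
Proof. by rewrite /vsym2 -addrA addrC. Qed.

Lemma Ppoly_neq0 x y z : Ppoly #|F| x y z != 0 <-> vsym2 x y z = 0.
Proof.
rewrite prod_one_sub_expf_neq0; split=> [s0 | /ffunP s0 i].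
  by apply/ffunP=> i; rewrite !ffunE s0.
by have := s0 i; rewrite !ffunE.
Qed.

Hypothesis F_char3 : 3 \in [pchar F].

Lemma vsym2_diag x : vsym2 x x x = 0.
Proof.
apply/ffunP=> i; rewrite !ffunE.
have -> : x i * x i + x i * x i + x i * x i = x i * x i * 3%:R by ring.
by rewrite (pcharf0 F_char3) mulr0.
Qed.

Lemma vsym2_eq0_supp x z i : vsym2 x x z = 0 -> x i = 0 \/ x i = z i.
Proof.
move=> /ffunP/(_ i); rewrite !ffunE => s0.
have : x i * (x i - z i) = 0.
  have -> : x i * (x i - z i)
            = x i * x i + x i * z i + z i * x i - x i * z i * 3%:R by ring.
  by rewrite s0 (pcharf0 F_char3) mulr0 subr0.
by move/eqP; rewrite mulf_eq0 subr_eq0 => /orP[] /eqP; [left | right].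
Qed.

Lemma vsym2_eq0_nzeros x z : vsym2 x x z = 0 -> nzeros x = nzeros z -> x = z.
Proof.
move=> s0 card_eq; have supp i := vsym2_eq0_supp i s0.
have zeros_sub : [set i | z i == 0] \subset [set i | x i == 0].
  apply/subsetP=> i; rewrite !inE => /eqP zi0.
  by case: (supp i) => ->; rewrite ?zi0.
have /eqP zeros_eq : [set i | z i == 0] == [set i | x i == 0].
  by rewrite eqEcard zeros_sub -/(nzeros x) -/(nzeros z) card_eq /=.
apply/ffunP=> i; case: (supp i) => // xi0.
suff : i \in [set i | z i == 0] by rewrite inE xi0 => /eqP ->.
by rewrite zeros_eq inE xi0.
Qed.

End FiniteField.

Theorem lemma4p7 (k n j : nat) (F : finFieldType)
  (hk : (0 < k)%N) (hn : (0 < n)%N) (hj : (j <= n)%N)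
  (hF : #|F| = (3 ^ k)%N)
  (A : {set {ffun 'I_n -> F}})
  (hA0 : forall x, x \in A -> nzeros x = j)
  (hA : forall x y z, x \in A -> y \in A -> z \in A ->
        x != y -> y != z -> x != z ->
        vmul x y + vmul y z + vmul z x != 0) :
  forall x y z, x \in A -> y \in A -> z \in A ->
    (Ppoly (3 ^ k)%N x y z != 0 <-> (x = y /\ y = z)).
Proof.
have F_char3 : 3 \in [pchar F] by exact: card_finPcharP hF _.
have eqA u v : u \in A -> v \in A -> vsym2 u u v = 0 -> u = v.
  by move=> uA vA s0; apply: vsym2_eq0_nzeros s0 _; rewrite ?hA0.
move=> x y z xA yA zA; rewrite -hF Ppoly_neq0.
split=> [s0 | [<- <-]]; last exact: vsym2_diag.
have [x_eq_y | x_neq_y] := eqVneq x y.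
  by subst y; split=> //; exact: eqA xA zA s0.
have [y_eq_z | y_neq_z] := eqVneq y z.
  subst z; rewrite vsym2_rot in s0.
  by rewrite (eqA _ _ yA xA s0) eqxx in x_neq_y.
have [x_eq_z | x_neq_z] := eqVneq x z.
  subst z; rewrite 2!vsym2_rot in s0.
  by rewrite (eqA _ _ xA yA s0) eqxx in x_neq_y.
by have := hA _ _ _ xA yA zA x_neq_y y_neq_z x_neq_z; rewrite -/(vsym2 x y z) s0 eqxx.
Qed.
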